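(* Let $(M,\rho)$ be a metric space, $f:[a,b]\to M$ arbitrary, and $E=\{x\in[a,b]: md(f,x)\text{ exists and } md(f,x)=0\}$. Then $\mathcal H^1(f(E))=0$.
   Context: $md(f,x)=\lim_{t\to0,\ x+t\in[a,b]}\rho(f(x+t),f(x))/|t|$ when it exists. $\mathcal H^1$ is one-dimensional Hausdorff measure on $M$. *)

From HB Require Import structures.
From mathcomp Require Import all_boot all_order all_algebra.
From mathcomp Require Import all_classical all_reals all_analysis.
Set Implicit Arguments. Unset Strict Implicit. Unset Printing Implicit Defensive.
Import Order.TTheory GRing.Theory Num.Theory.
Local Open Scope classical_set_scope.
Local Open Scope ring_scope.

Definition is_metric (R : realType) (M : Type) (rho : M -> M -> R) : Prop :=
  (forall x y, 0 <= rho x y) /\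
  (forall x y, rho x y = 0 <-> x = y) /\
  (forall x y, rho x y = rho y x) /\
  (forall x y z, rho x z <= rho x y + rho y z).

(* "md(f,x) exists and equals 0": the limit of rho(f(x+t),f(x))/|t| as t -> 0,
   t <> 0, x+t in [a,b], exists and equals 0 (epsilon-delta form). *)
Definition md_zero (R : realType) (M : Type) (rho : M -> M -> R)
  (a b : R) (f : R -> M) (x : R) : Prop :=
  forall e : R, 0 < e -> exists2 d : R, 0 < d &
    forall t : R, t != 0 -> `|t| < d -> a <= x + t <= b ->
      rho (f (x + t)) (f x) / `|t| < e.

(* diameter, with diam(empty) = 0 *)
Definition diam (R : realType) (M : Type) (rho : M -> M -> R) (C : set M) : \bar R :=
  ereal_sup ([set 0%E] `|` [set (rho p.1 p.2)%:E | p in C `*` C]).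

Definition hausdorff1_delta (R : realType) (M : Type) (rho : M -> M -> R)
  (delta : R) (A : set M) : \bar R :=
  ereal_inf [set (\sum_(i <oo) diam rho (C i))%E | C in
     [set C : nat -> set M | A `<=` \bigcup_i C i /\
                             forall i, (diam rho (C i) <= delta%:E)%E]].

(* one-dimensional Hausdorff measure: lim_{delta -> 0+} = sup over delta > 0 *)
Definition hausdorff1 (R : realType) (M : Type) (rho : M -> M -> R)
  (A : set M) : \bar R :=
  ereal_sup [set hausdorff1_delta rho delta A | delta in [set d : R | 0 < d]].

From HB Require Import structures.
From mathcomp Require Import all_boot all_order all_algebra.
From mathcomp Require Import all_classical all_reals all_analysis.
From mathcomp Require Import ring lra measurable_realfun.
Import Order.TTheory GRing.Theory Num.Theory.
Import numFieldNormedType.Exports.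
Local Open Scope classical_set_scope.
Local Open Scope ring_scope.

(* Fix eps > 0. At every x of E, md(f,x) = 0 yields a radius r_x such that
   rho(f y, f x) <= eps |y - x| for y in E with |y - x| <= 5 r_x. Vitali's
   covering lemma extracts a countable disjoint family of balls B(x, r_x) whose
   5-fold enlargements cover E; the images of E inside these enlargements cover
   f(E) and have diameter at most 10 eps r_x = 5 eps |B(x, r_x)|. Since the
   balls are disjoint and lie in a fixed bounded interval I, the sum of these
   diameters is at most 5 eps |I|. *)

Section diameter.
Context {R : realType} {M : Type} (rho : M -> M -> R).

Lemma diam_ge0 (C : set M) : (0 <= diam rho C)%E.
Proof. by apply: ereal_sup_ubound; left. Qed.

Lemma diam_le (C : set M) (k : R) : 0 <= k ->
  (forall p q, C p -> C q -> rho p q <= k) -> (diam rho C <= k%:E)%E.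
Proof.
move=> k0 Ck; apply: ge_ereal_sup => _ [->|[[p q] [/= Cp Cq] <-]].
  by rewrite lee_fin.
by rewrite lee_fin; apply: Ck.
Qed.

Lemma diam_set0 : diam rho set0 = 0%E.
Proof.
apply/eqP; rewrite eq_le diam_ge0 andbT.
by apply: diam_le => // p q [].
Qed.

Lemma diam_le_center (C : set M) (z : M) (s : R) :
  (forall p q, rho p q = rho q p) -> (forall p q w, rho p w <= rho p q + rho q w) ->
  0 <= s -> (forall p, C p -> rho p z <= s) -> (diam rho C <= (s *+ 2)%:E)%E.
Proof.
move=> rho_sym rho_tri s0 Cz; apply: diam_le => [|p q Cp Cq].
  by rewrite mulrn_wge0.
rewrite (le_trans (rho_tri _ z _)) // mulr2n (rho_sym z) lerD //; exact: Cz.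
Qed.

Lemma hausdorff1_delta_le_cover {delta : R} {A : set M} {C : nat -> set M} :
  A `<=` \bigcup_i C i -> (forall i, (diam rho (C i) <= delta%:E)%E) ->
  (hausdorff1_delta rho delta A <= \sum_(i <oo) diam rho (C i))%E.
Proof. by move=> AC Cdelta; apply: ereal_inf_lbound; exists C. Qed.

Lemma hausdorff1_delta_ge0 (delta : R) (A : set M) :
  (0 <= hausdorff1_delta rho delta A)%E.
Proof.
apply: le_ereal_inf_tmp => _ [C _ <-].
by apply: nneseries_ge0 => i _ _; exact: diam_ge0.
Qed.

Lemma hausdorff1_eq0 (A : set M) :
  (forall delta c, 0 < delta -> 0 < c -> (hausdorff1_delta rho delta A <= c%:E)%E) ->
  hausdorff1 rho A = 0%E.
Proof.
move=> small; apply/eqP; rewrite eq_le; apply/andP; split.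
  apply: ge_ereal_sup => _ [delta d0 <-].
  by apply/lee_addgt0Pr => c c0; rewrite add0e; exact: small.
apply: (le_trans (hausdorff1_delta_ge0 1 A)).
by apply: ereal_sup_ubound; exists 1 => //; exact: ltr01.
Qed.

End diameter.

Lemma nneseries_measure_le {d} {T : measurableType d} {R : realType}
    (mu : {measure set T -> \bar R}) {F : nat -> set T} {A : set T} :
  (forall n, measurable (F n)) -> trivIset setT F ->
  \bigcup_n F n `<=` A -> measurable A ->
  (\sum_(n <oo) mu (F n) <= mu A)%E.
Proof.
move=> mF tF FA mA; have mUF : measurable (\bigcup_n F n).
  by apply: bigcupT_measurable.
by rewrite -measure_semi_bigcup //; apply: le_measure; rewrite ?inE.
Qed.

Definition md_zero_within {R : realType} {M : Type} (rho : M -> M -> R)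
  (E : set R) (g : R -> M) (x : R) : Prop :=
  forall e : R, 0 < e -> exists2 d : R, 0 < d &
    forall y, E y -> `|y - x| < d -> rho (g y) (g x) <= e * `|y - x|.

Section md_zero_within.
Context {R : realType} {M : Type} {rho : M -> M -> R}.

Lemma md_zero_withinS {E E' : set R} {g : R -> M} {x : R} :
  E' `<=` E -> md_zero_within rho E g x -> md_zero_within rho E' g x.
Proof.
move=> E'E gx e e0; have [d d0 hd] := gx e e0.
by exists d => // y /E'E; exact: hd.
Qed.

Lemma md_zero_within_interval {a b : R} {f : R -> M} {x : R} :
  (forall p, rho p p = 0) -> md_zero rho a b f x ->
  md_zero_within rho [set y | a <= y <= b] f x.
Proof.
move=> rho0 fx e e0; have [d d0 hd] := fx e e0; exists d => // y aby yxd.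
have [->|yx] := eqVneq y x; first by rewrite rho0 subrr normr0 mulr0.
have := hd (y - x); rewrite subr_eq0 subrKC => /(_ yx yxd aby).
by rewrite ltr_pdivrMr ?normr_gt0 ?subr_eq0 // mulrC => /ltW.
Qed.

Lemma md_zero_within_radius {E : set R} {g : R -> M} {x eps : R} :
  0 < eps -> md_zero_within rho E g x ->
  exists2 r, 0 < r /\ r <= 1 &
    forall y, E y -> `|x - y| <= 5 * r -> rho (g y) (g x) <= eps * (5 * r).
Proof.
move=> eps0 gx; have [d d0 hd] := gx eps eps0.
pose r := Num.min (d / 10) 1.
have rd : r <= d / 10 by rewrite /r ge_min lexx.
exists r; first by rewrite /r lt_min ltr01 divr_gt0 // ge_min lexx orbT.
move=> y Ey xy; rewrite distrC in xy.
by rewrite (le_trans (hd y Ey _)) ?ler_pM2l //; lra.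
Qed.

End md_zero_within.

Lemma fiber_set0_or_set1 {T U : Type} {D : set T} {h : T -> U} (n : U) :
  {in D &, injective h} ->
  D `&` h @^-1` [set n] = set0 \/ exists2 x, D x & D `&` h @^-1` [set n] = [set x].
Proof.
move=> hinj; have [->|/set0P[x [Dx hx]]] := eqVneq (D `&` h @^-1` [set n]) set0.
  by left.
right; exists x => //; apply/seteqP; split => [y [Dy hy]|y ->] //=.
by apply: hinj; rewrite ?inE //= hx hy.
Qed.

Lemma trivIset_bigcup_fiber {T U V : Type} {D : set T} {h : T -> U}
    {F : T -> set V} :
  trivIset D F -> trivIset setT (fun n => \bigcup_(x in D `&` h @^-1` [set n]) F x).
Proof.
move=> tF i j _ _ [z [[x [Dx hx] Fxz] [y [Dy hy] Fyz]]].
by rewrite -hx -hy (tF x y) //; exists z.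
Qed.

Section null_image.
Context {R : realType} {M : Type} {rho : M -> M -> R}.
Hypothesis rho_sym : forall p q, rho p q = rho q p.
Hypothesis rho_tri : forall p q w, rho p w <= rho p q + rho q w.
Context {g : R -> M} {E : set R} {c L : R}.
Hypothesis L_ge0 : 0 <= L.
Hypothesis E_bounded : E `<=` ball c L.

Section vitali_radius.
Context {eps delta : R} {r : R -> R}.
Hypothesis eps_ge0 : 0 <= eps.
Hypothesis eps_delta : 10 * eps <= delta.
Hypothesis r_gt0 : forall x, 0 < r x.
Hypothesis r_le1 : forall x, r x <= 1.
Hypothesis r_md : forall x, E x -> forall y, E y -> `|x - y| <= 5 * r x ->
  rho (g y) (g x) <= eps * (5 * r x).

Lemma diam_image_closed_ball {x : R} : E x ->
  (diam rho (g @` (E `&` [set y | (`|x - y| <= 5 * r x)%R])) <=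
    (10 * eps * r x)%:E)%E.
Proof.
move=> Ex; have -> : 10 * eps * r x = (eps * (5 * r x)) *+ 2 by rewrite mulr2n; ring.
apply: diam_le_center => //; first by rewrite mulr_ge0 // mulr_ge0 // ltW.
by move=> _ [y [Ey xy] <-]; exact: r_md.
Qed.

Lemma hausdorff1_delta_image_le_radius :
  (hausdorff1_delta rho delta (g @` E) <= (5 * eps * ((L + 1) *+ 2))%:E)%E.
Proof.
pose B x := ball x (r x).
have B_gt0 x : 0 < (radius (B x))%:num by rewrite radius_ball_num ?ltW.
have B_le1 x : E x -> (radius (B x))%:num <= 1.
  by move=> _; rewrite radius_ball_num ?(ltW (r_gt0 x)).
have [D [cD DE tD cov]] :=
  vitali_lemma_infinite (fun x => is_ball_ball x (r x)) B_gt0 B_le1.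
(* The fibers of an injection of the countable set D into nat index the balls. *)
have /countable_injP[h hinj] := cD.
pose Dn n := D `&` h @^-1` [set n].
pose Bn n := \bigcup_(x in Dn n) B x.
pose Cn n := g @` (E `&` \bigcup_(x in Dn n) [set y | `|x - y| <= 5 * r x]).
have Cn_le n : (diam rho (Cn n) <= delta%:E)%E /\
    (diam rho (Cn n) <= (5 * eps)%:E * lebesgue_measure (Bn n))%E.
  rewrite /Cn /Bn /Dn; have [->|[x Dx ->]] := fiber_set0_or_set1 n hinj.
    rewrite !bigcup_set0 setI0 image_set0 measure0 mule0 diam_set0.
    by split => //; rewrite lee_fin (le_trans _ eps_delta) // mulr_ge0.
  rewrite !bigcup_set1 /B lebesgue_measure_ball ?(ltW (r_gt0 x)) // -EFinM.
  have le_diam := diam_image_closed_ball (DE x Dx).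
  split; apply: (le_trans le_diam); rewrite lee_fin.
    by rewrite (le_trans _ eps_delta) // ler_piMr // mulr_ge0.
  by rewrite le_eqVlt mulr2n; apply/orP; left; apply/eqP; ring.
have cover : g @` E `<=` \bigcup_n Cn n.
  move=> _ [y Ey <-]; have [j [Dj _ _ yj]] := cov y Ey.
  exists (h j) => //; exists y => //; split => //; exists j => //.
  have := yj y (subset_closure (ballxx y (r_gt0 y))).
  by rewrite /B scale_ballE // closure_ballE closed_ballE ?mulr_gt0.
have tBn : trivIset setT Bn.
  apply: trivIset_bigcup_fiber => x y Dx Dy [z [Bxz Byz]].
  by apply: tD => //; exists z; split; exact: subset_closure.
have mBn n : measurable (Bn n).
  by apply: open_measurable; apply: bigcup_open => x _; exact: ball_open.
have Bn_sub : \bigcup_n Bn n `<=` ball c (L + 1).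
  move=> z [n _ [x [Dx _] Bxz]]; apply: (le_ball (lerD (lexx L) (r_le1 x))).
  exact: ball_triangle (E_bounded _ (DE x Dx)) Bxz.
apply: (le_trans (hausdorff1_delta_le_cover rho cover (fun n => (Cn_le n).1))).
apply: (@le_trans _ _ (\sum_(n <oo) ((5 * eps)%:E * lebesgue_measure (Bn n)))%E).
  apply: lee_nneseries => [n _ _|n _]; [exact: diam_ge0|exact: (Cn_le n).2].
rewrite nneseriesZl; last by move=> n _; exact: measure_ge0.
apply: (@le_trans _ _ ((5 * eps)%:E * lebesgue_measure (ball c (L + 1)))%E).
  apply: lee_wpmul2l; first by rewrite lee_fin mulr_ge0.
  have := nneseries_measure_le lebesgue_measure mBn tBn Bn_sub.
  by apply; exact: measurable_ball.
by rewrite lebesgue_measure_ball ?addr_ge0 // -EFinM.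
Qed.

End vitali_radius.

Hypothesis g_md0 : forall x, E x -> md_zero_within rho E g x.

Lemma hausdorff1_image_eq0 : hausdorff1 rho (g @` E) = 0%E.
Proof.
apply: hausdorff1_eq0 => delta e delta0 e0.
pose eps := Num.min (e / (10 * (L + 1))) (delta / 10).
have L1_gt0 : 0 < L + 1 by rewrite ltr_wpDl.
have eps0 : 0 < eps by rewrite lt_min !divr_gt0 ?mulr_gt0.
have /choice[r hr] : forall x, exists rx : R, [/\ 0 < rx, rx <= 1 &
    E x -> forall y, E y -> `|x - y| <= 5 * rx -> rho (g y) (g x) <= eps * (5 * rx)].
  move=> x; have [Ex|nEx] := pselect (E x); last by exists 1; split => // /nEx.
  by have [rx [rx0 rx1] rxg] := md_zero_within_radius eps0 (g_md0 x Ex); exists rx.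
apply: le_trans (hausdorff1_delta_image_le_radius (r := r) (ltW eps0) _ _ _ _) _.
- by rewrite mulrC -ler_pdivlMr // ge_min lexx orbT.
- by move=> x; case: (hr x).
- by move=> x; case: (hr x).
- by move=> x Ex; case: (hr x) => _ _ /(_ Ex).
have : eps * (10 * (L + 1)) <= e by rewrite -ler_pdivlMr ?mulr_gt0 // ge_min lexx.
by rewrite lee_fin mulr2n; lra.
Qed.

End null_image.

Theorem theorem3p13 (R : realType) (M : Type) (rho : M -> M -> R)
  (hrho : is_metric rho) (a b : R) (f : R -> M) :
  hausdorff1 rho (f @` [set x | a <= x <= b /\ md_zero rho a b f x]) = 0%E.
Proof.
have [_ [rho_eq0 [rho_sym rho_tri]]] := hrho.
set E := [set x | a <= x <= b /\ md_zero rho a b f x].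
have E_bounded : E `<=` ball a (`|b - a| + 1).
  move=> x [/andP[ax xb] _]; rewrite -ball_normE /= distrC ger0_norm ?subr_ge0 //.
  by have := ler_norm (b - a); lra.
apply: (hausdorff1_image_eq0 rho_sym rho_tri (addr_ge0 (normr_ge0 _) ler01) E_bounded).
have rho_xx p : rho p p = 0 by apply/rho_eq0.
by move=> x [_ fx]; apply: md_zero_withinS (md_zero_within_interval rho_xx fx) => y [].
Qed.
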